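(* Let $A\in\mathbb{C}^{m\times n}$ have rank $r$ and satisfy $\mathrm{rank}(A^{\sim}AA^{\sim})=\mathrm{rank}(A)$. Then there exists a unique matrix $X\in\mathbb{C}^{n\times n}$ such that $AX=0$, $X^{\sim}=X$, $X^2=X$, $\mathrm{rank}(X)=n-r$; there exists a unique matrix $Y\in\mathbb{C}^{m\times m}$ such that $YA=0$, $Y^{\sim}=Y$, $Y^2=Y$, $\mathrm{rank}(Y)=m-r$; and, for these $X,Y$, there exists a unique matrix $Z\in\mathbb{C}^{n\times m}$ such that $$\mathrm{rank}\begin{pmatrix}A&I_m-Y\\ I_n-X&Z\end{pmatrix}=\mathrm{rank}(A).$$ Furthermore, $X=I_n-A^{\mathfrak{m}}A$, $Y=I_m-AA^{\mathfrak{m}}$ and $Z=A^{\mathfrak{m}}$.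
   Context: For a positive integer $k$, the Minkowski metric matrix of order $k$ is $G_k=\mathrm{diag}(1,-I_{k-1})$ (with $G_1=(1)$). For $M\in\mathbb{C}^{p\times q}$, the Minkowski adjoint is $M^{\sim}=G_qM^*G_p$, where $M^*$ is the conjugate transpose. The Minkowski inverse of $A\in\mathbb{C}^{m\times n}$, denoted $A^{\mathfrak{m}}$, is the (unique) matrix $W\in\mathbb{C}^{n\times m}$ with $AWA=A$, $WAW=W$, $(AW)^{\sim}=AW$, $(WA)^{\sim}=WA$, when it exists. *)

From HB Require Import structures.
From mathcomp Require Import all_boot all_order all_algebra.
Set Implicit Arguments. Unset Strict Implicit. Unset Printing Implicit Defensive.
Import Order.TTheory GRing.Theory Num.Theory.
Local Open Scope ring_scope.

(* Complex numbers: any numeric closed field C (e.g. the complex numbers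
   R[i] over a real type, or algC); conjugation is Num.conj (z^* ). *)

Definition mink_G (C : numClosedFieldType) (k : nat) : 'M[C]_k :=
  \matrix_(i < k, j < k)
    (if i == j then (if nat_of_ord i == 0%N then 1 else -1) else 0).

Definition ctrmx (C : numClosedFieldType) (p q : nat) (M : 'M[C]_(p, q))
  : 'M[C]_(q, p) := (map_mx (fun z => z^*) M)^T.

Definition madj (C : numClosedFieldType) (p q : nat) (M : 'M[C]_(p, q))
  : 'M[C]_(q, p) := mink_G C q *m ctrmx M *m mink_G C p.

Definition is_mink_inverse (C : numClosedFieldType) (m n : nat)
  (A : 'M[C]_(m, n)) (W : 'M[C]_(n, m)) : Prop :=
  [/\ A *m W *m A = A, W *m A *m W = W,
      madj (A *m W) = A *m W & madj (W *m A) = W *m A].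

(* Under the rank condition the column and row spaces of [A~ A A~] are those
   of [A~], so [A~ = Q (A~ A A~) = (A~ A A~) P] and [W = A~ P = Q A~] is a
   Minkowski inverse: the products [A W] and [W A] are Minkowski self-adjoint
   because [(A W)~ A = A] and [A (W A)~ = A].  A Minkowski self-adjoint
   idempotent [X] with [A X = 0] satisfies [W A X = 0 = X W A]; if its rank is
   [n - rank A] it has the row space of [ker (W A)], like [I - W A], and this
   forces [X = I - W A]; dually for [I - A W].  Finally,
   block elimination with [W] gives
   [rank [A, A W; W A, Z] = rank A + rank (Z - W A W)], which equals [rank A]
   exactly when [Z = W A W = W]. *)
From HB Require Import structures.
From mathcomp Require Import all_boot all_order all_algebra.
Import Order.TTheory GRing.Theory Num.Theory.
Local Open Scope ring_scope.

Set Implicit Arguments. Unset Strict Implicit. Unset Printing Implicit Defensive.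

Section GeneralizedInverse.
Variable F : fieldType.

Lemma mxrank_ginv_mull m n (A : 'M[F]_(m, n)) (W : 'M[F]_(n, m)) :
  A *m W *m A = A -> \rank (W *m A) = \rank A.
Proof.
move=> AWA; apply/eqP; rewrite eqn_leq mxrankM_maxr /=.
by rewrite -{1}AWA -mulmxA mxrankM_maxr.
Qed.

Lemma mxrank_ginv_mulr m n (A : 'M[F]_(m, n)) (W : 'M[F]_(n, m)) :
  A *m W *m A = A -> \rank (A *m W) = \rank A.
Proof.
move=> AWA; apply/eqP; rewrite eqn_leq mxrankM_maxl /=.
by rewrite -{1}AWA mxrankM_maxl.
Qed.

Lemma mxrank_block_schur m n (A : 'M[F]_(m, n)) (W Z : 'M[F]_(n, m)) :
  \rank (block_mx A (A *m W) (W *m A) Z) = (\rank A + \rank (Z - W *m A *m W)%R)%N.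
Proof.
pose L : 'M[F]_(m + n) := block_mx 1%:M 0 (- W) 1%:M.
pose R : 'M[F]_(n + m) := block_mx 1%:M (- W) 0 1%:M.
have L_full : row_full L.
  apply/row_fullP; exists (block_mx 1%:M 0 W 1%:M).
  by rewrite mulmx_block scalar_mx_block !(mul1mx, mulmx1, mul0mx, mulmx0, addr0, add0r) subrr.
have R_free : row_free R.
  apply/row_freeP; exists (block_mx 1%:M W 0 1%:M).
  rewrite mulmx_block scalar_mx_block !(mul1mx, mulmx1, mul0mx, mulmx0, addr0, add0r).
  by congr block_mx; apply/matrixP => i j; rewrite !mxE subrr.
set M := block_mx _ _ _ _.
rewrite -(eqmxMfull M L_full) -(mxrankMfree _ R_free) -rank_diag_block_mx.
rewrite /L /M /R !mulmx_block !(mul1mx, mulmx1, mul0mx, mulmx0, addr0, add0r).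
by rewrite mulmxN mulNmx !addNr mulNmx mulmxA mul0mx add0r addrC.
Qed.

Lemma mxrank_block_schur_eqP m n (A : 'M[F]_(m, n)) (W Z : 'M[F]_(n, m)) :
  W *m A *m W = W ->
  \rank (block_mx A (A *m W) (W *m A) Z) = \rank A <-> Z = W.
Proof.
move=> WAW; rewrite mxrank_block_schur WAW.
split=> [/eqP | ->]; last by rewrite subrr mxrank0 addn0.
by rewrite -[X in _ == X]addn0 eqn_add2l mxrank_eq0 subr_eq0 => /eqP.
Qed.

Lemma idempotent_compl k (P : 'M[F]_k) :
  P *m P = P -> (1%:M - P) *m (1%:M - P) = 1%:M - P.
Proof. by move=> PP; rewrite mulmxBl mul1mx mulmxBr mulmx1 PP subrr subr0. Qed.

Lemma idempotent_compl_eq_ker k (P : 'M[F]_k) :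
  P *m P = P -> (1%:M - P :=: kermx P)%MS.
Proof.
move=> PP; apply/eqmxP/andP; split.
  by apply/sub_kermxP; rewrite mulmxBl mul1mx PP subrr.
have -> : kermx P = kermx P *m (1%:M - P) by rewrite mulmxBr mulmx1 mulmx_ker subr0.
exact: submxMl.
Qed.

Lemma mxrank_idempotent_compl k (P : 'M[F]_k) :
  P *m P = P -> \rank (1%:M - P) = (k - \rank P)%N.
Proof. by move=> PP; rewrite (idempotent_compl_eq_ker PP) mxrank_ker. Qed.

Lemma idempotent_compl_unique k (P X : 'M[F]_k) :
  P *m P = P -> X *m X = X -> P *m X = 0 -> X *m P = 0 ->
  \rank X = (k - \rank P)%N -> X = 1%:M - P.
Proof.
move=> PP XX PX XP rankX.
have X_ker : (X <= kermx P)%MS by apply/sub_kermxP.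
have : (1%:M - P <= X)%MS.
  by rewrite (idempotent_compl_eq_ker PP) -(mxrank_leqif_sup X_ker).2 rankX mxrank_ker.
case/submxP=> D def_compl.
have : (1%:M - P) *m X = 1%:M - P by rewrite def_compl -mulmxA XX.
by rewrite mulmxBl mul1mx PX subr0.
Qed.

End GeneralizedInverse.

Section MinkowskiAdjoint.
Variable C : numClosedFieldType.

Lemma mink_G_diag k :
  mink_G C k = diag_mx (\row_(j < k) (if nat_of_ord j == 0%N then 1 else -1)).
Proof.
by apply/matrixP => i j; rewrite !mxE; case: eqP => [->|]; rewrite ?mulr1n ?mulr0n.
Qed.

Lemma mink_GK k : mink_G C k *m mink_G C k = 1%:M.
Proof.
rewrite mink_G_diag mulmx_diag; apply/matrixP => i j; rewrite !mxE.
by case: (_ == 0%N); rewrite ?mulr1 ?mulrNN ?mulr1.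
Qed.

Lemma ctrmxM p q r (A : 'M[C]_(p, q)) (B : 'M[C]_(q, r)) :
  ctrmx (A *m B) = ctrmx B *m ctrmx A.
Proof. by rewrite /ctrmx map_mxM trmx_mul. Qed.

Lemma ctrmxK p q (A : 'M[C]_(p, q)) : ctrmx (ctrmx A) = A.
Proof. by rewrite /ctrmx -map_trmx trmxK; apply/matrixP => i j; rewrite !mxE conjCK. Qed.

Lemma ctrmxB p q (A B : 'M[C]_(p, q)) : ctrmx (A - B) = ctrmx A - ctrmx B.
Proof. by rewrite /ctrmx map_mxB linearB. Qed.

Lemma ctrmx1 p : ctrmx (1%:M : 'M[C]_p) = 1%:M.
Proof. by rewrite /ctrmx map_mx1 trmx1. Qed.

Lemma ctrmx_mink_G k : ctrmx (mink_G C k) = mink_G C k.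
Proof.
rewrite /ctrmx mink_G_diag map_diag_mx tr_diag_mx; congr diag_mx.
by apply/matrixP => i j; rewrite !mxE; case: (_ == 0%N); rewrite ?rmorph1 ?rmorphN1.
Qed.

Lemma mxrank_ctrmx p q (A : 'M[C]_(p, q)) : \rank (ctrmx A) = \rank A.
Proof. by rewrite mxrank_tr mxrank_map. Qed.

Lemma madjM p q r (A : 'M[C]_(p, q)) (B : 'M[C]_(q, r)) :
  madj (A *m B) = madj B *m madj A.
Proof.
by rewrite /madj ctrmxM !mulmxA -[_ *m mink_G C q *m mink_G C q]mulmxA mink_GK mulmx1.
Qed.

Lemma madjK p q (A : 'M[C]_(p, q)) : madj (madj A) = A.
Proof.
by rewrite /madj !ctrmxM ctrmxK !ctrmx_mink_G !mulmxA mink_GK mul1mx -mulmxA mink_GK mulmx1.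
Qed.

Lemma madjB p q (A B : 'M[C]_(p, q)) : madj (A - B) = madj A - madj B.
Proof. by rewrite /madj ctrmxB mulmxBr mulmxBl. Qed.

Lemma madj0 p q : madj (0 : 'M[C]_(p, q)) = 0.
Proof. by rewrite -(subrr (0 : 'M[C]_(p, q))) madjB subrr. Qed.

Lemma madj1 p : madj (1%:M : 'M[C]_p) = 1%:M.
Proof. by rewrite /madj ctrmx1 mulmx1 mink_GK. Qed.

Lemma mxrank_madj p q (A : 'M[C]_(p, q)) : \rank (madj A) = \rank A.
Proof.
have G_free k : row_free (mink_G C k) by apply/row_freeP; exists (mink_G C k); apply: mink_GK.
have G_full k : row_full (mink_G C k) by apply/row_fullP; exists (mink_G C k); apply: mink_GK.
by rewrite /madj mxrankMfree // eqmxMfull // mxrank_ctrmx.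
Qed.

Lemma madj_compl k (P : 'M[C]_k) : madj P = P -> madj (1%:M - P) = 1%:M - P.
Proof. by move=> sP; rewrite madjB madj1 sP. Qed.

Lemma madj_mulmx_of_madjl p q (A : 'M[C]_(p, q)) (W : 'M[C]_(q, p)) :
  madj (A *m W) *m A = A -> madj (A *m W) = A *m W.
Proof.
move=> EA; have EE : madj (A *m W) *m (A *m W) = A *m W by rewrite mulmxA EA.
by rewrite -{1}EE madjM madjK EE.
Qed.

Lemma madj_mulmx_of_madjr p q (A : 'M[C]_(p, q)) (W : 'M[C]_(q, p)) :
  A *m madj (W *m A) = A -> madj (W *m A) = W *m A.
Proof.
move=> AE; have EE : W *m A *m madj (W *m A) = W *m A by rewrite -mulmxA AE.
by rewrite -{1}EE madjM madjK EE.
Qed.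

End MinkowskiAdjoint.

Lemma mink_inverse_exists (C : numClosedFieldType) m n (A : 'M[C]_(m, n)) :
  \rank (madj A *m A *m madj A) = \rank A -> exists W, is_mink_inverse A W.
Proof.
move=> rankT; set A' := madj A; set T := A' *m A *m A'.
have rankTA' : \rank T = \rank A' by rewrite rankT mxrank_madj.
have [Q A'_QT] : exists Q, A' = Q *m T.
  by apply/submxP; rewrite -(mxrank_leqif_sup (submxMl _ _)).2 rankTA'.
have [P A'_TP] : exists P, A' = T *m P.
  have T_tr : T^T = (A *m A')^T *m A'^T by rewrite -trmx_mul mulmxA.
  have sTA' : (T^T <= A'^T)%MS by rewrite T_tr submxMl.
  have /submxP[D A'_DT] : (A'^T <= T^T)%MS.
    by rewrite -(mxrank_leqif_sup sTA').2 !mxrank_tr rankTA'.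
  by exists D^T; rewrite -[A']trmxK A'_DT trmx_mul trmxK.
set W := A' *m P.
have W_QA' : W = Q *m A' by rewrite /W [in RHS]A'_TP mulmxA -A'_QT.
have A'AW : A' *m (A *m W) = A' by rewrite [in RHS]A'_TP mulmxA /W mulmxA.
have WAA' : W *m A *m A' = A' by rewrite W_QA' [in RHS]A'_QT -(mulmxA Q) -(mulmxA Q).
have AW_A : madj (A *m W) *m A = A.
  by have := congr1 (@madj _ _ _) A'AW; rewrite madjM madjK.
have A_WA : A *m madj (W *m A) = A.
  by have := congr1 (@madj _ _ _) WAA'; rewrite madjM madjK.
have sAW := madj_mulmx_of_madjl AW_A; have sWA := madj_mulmx_of_madjr A_WA.
exists W; split=> //; first by rewrite -[RHS]AW_A sAW.
have WAW : W *m A *m (A' *m P) = W by rewrite mulmxA WAA'.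
exact: WAW.
Qed.

Section MinkowskiInverse.
Variables (C : numClosedFieldType) (m n : nat).
Variables (A : 'M[C]_(m, n)) (W : 'M[C]_(n, m)).
Hypothesis W_mink : is_mink_inverse A W.

Lemma mink_ker_projectorP X :
  [/\ A *m X = 0, madj X = X, X *m X = X & \rank X = (n - \rank A)%N] <->
  X = 1%:M - W *m A.
Proof.
have [AWA WAW _ sWA] := W_mink.
have WA_idem : W *m A *m (W *m A) = W *m A by rewrite mulmxA WAW.
have rankWA := mxrank_ginv_mull AWA.
split=> [[AX sX XX rankX] | ->].
  have WAX : W *m A *m X = 0 by rewrite -mulmxA AX mulmx0.
  apply: idempotent_compl_unique => //; last by rewrite rankWA.
  by have := congr1 (@madj _ _ _) WAX; rewrite madjM sX sWA madj0.
split; [by rewrite mulmxBr mulmx1 mulmxA AWA subrr | exact: madj_compl |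
        exact: idempotent_compl | by rewrite mxrank_idempotent_compl // rankWA].
Qed.

Lemma mink_coker_projectorP Y :
  [/\ Y *m A = 0, madj Y = Y, Y *m Y = Y & \rank Y = (m - \rank A)%N] <->
  Y = 1%:M - A *m W.
Proof.
have [AWA _ sAW _] := W_mink.
have AW_idem : A *m W *m (A *m W) = A *m W by rewrite mulmxA AWA.
have rankAW := mxrank_ginv_mulr AWA.
split=> [[YA sY YY rankY] | ->].
  have YAW : Y *m (A *m W) = 0 by rewrite mulmxA YA mul0mx.
  apply: idempotent_compl_unique => //; last by rewrite rankAW.
  by have := congr1 (@madj _ _ _) YAW; rewrite madjM sY sAW madj0.
split; [by rewrite mulmxBl mul1mx AWA subrr | exact: madj_compl |
        exact: idempotent_compl | by rewrite mxrank_idempotent_compl // rankAW].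
Qed.

End MinkowskiInverse.

Theorem theorem7p5 (C : numClosedFieldType) (m n : nat)
  (Hm : (0 < m)%N) (Hn : (0 < n)%N) (A : 'M[C]_(m, n))
  (HA : \rank (madj A *m A *m madj A) = \rank A) :
  let r := \rank A in
  let PX := fun X : 'M[C]_n =>
    [/\ A *m X = 0, madj X = X, X *m X = X & \rank X = (n - r)%N] in
  let PY := fun Y : 'M[C]_m =>
    [/\ Y *m A = 0, madj Y = Y, Y *m Y = Y & \rank Y = (m - r)%N] in
  let PZ := fun (X : 'M[C]_n) (Y : 'M[C]_m) (Z : 'M[C]_(n, m)) =>
    \rank (block_mx A (1%:M - Y) (1%:M - X) Z) = r in
  [/\ (exists! X, PX X),
      (exists! Y, PY Y),
      (forall X Y, PX X -> PY Y -> exists! Z, PZ X Y Z) &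
      exists W, is_mink_inverse A W /\
        forall X Y Z, PX X -> PY Y -> PZ X Y Z ->
          [/\ X = 1%:M - W *m A, Y = 1%:M - A *m W & Z = W]].
Proof.
move=> r PX PY PZ.
have [W W_mink] := mink_inverse_exists HA.
have PXE := mink_ker_projectorP W_mink; have PYE := mink_coker_projectorP W_mink.
have PZE Z : PZ (1%:M - W *m A) (1%:M - A *m W) Z <-> Z = W.
  have [_ WAW _ _] := W_mink.
  by rewrite /PZ !subKr; apply: mxrank_block_schur_eqP.
split.
- by exists (1%:M - W *m A); split=> [|X /PXE]; [apply/PXE|].
- by exists (1%:M - A *m W); split=> [|Y /PYE]; [apply/PYE|].
- by move=> X Y /PXE -> /PYE ->; exists W; split=> [|Z /PZE]; [apply/PZE|].
- by exists W; split=> // X Y Z /PXE -> /PYE -> /PZE ->.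
Qed.
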